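(* Let $X$ be a real Banach space with $\operatorname{dens} X \geq \omega_2$. Suppose that $X$ has a fundamental biorthogonal system. Then $X$ does not contain overcomplete subsets.
   Context: A biorthogonal system in $X$ is a family $\{x_\alpha; f_\alpha\}_{\alpha\in\Gamma} \subseteq X \times X^*$ with $\langle f_\alpha, x_\beta\rangle = \delta_{\alpha,\beta}$ for all $\alpha,\beta\in\Gamma$; it is fundamental if $\overline{\operatorname{span}}\{x_\alpha\}_{\alpha\in\Gamma} = X$. $\operatorname{dens}$ denotes the density character. A subset $S$ of a Banach space $X$ with $|S| = \operatorname{dens} X$ is called overcomplete if every subset $\Lambda \subseteq S$ with $|\Lambda| = |S|$ is linearly dense in $X$. *)

From HB Require Import structures.
From mathcomp Require Import all_boot all_order all_algebra.
From mathcomp Require Import all_classical all_reals all_analysis.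
Set Implicit Arguments. Unset Strict Implicit. Unset Printing Implicit Defensive.
Import Order.TTheory GRing.Theory Num.Theory.
Import numFieldNormedType.Exports.
Local Open Scope classical_set_scope.
Local Open Scope ring_scope.
Local Open Scope card_scope.

Definition lspan (R : realType) (X : lmodType R) (A : set X) : set X :=
  [set x | exists (n : nat) (c : 'I_n -> R) (v : 'I_n -> X),
             (forall i, A (v i)) /\ x = \sum_(i < n) c i *: v i].

Definition linearly_dense (R : realType) (X : normedModType R) (A : set X) : Prop :=
  closure (lspan A) = setT.

Definition is_dual_elt (R : realType) (X : normedModType R) (f : X -> R) : Prop :=
  [/\ (forall u v : X, f (u + v) = f u + f v),
      (forall (a : R) (u : X), f (a *: u) = a * f u) &
      continuous f].

Definition has_fundamental_biorthogonal_system (R : realType)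
    (X : normedModType R) : Prop :=
  exists (Gamma : Type) (x : Gamma -> X) (f : Gamma -> X -> R),
    [/\ (forall a, is_dual_elt (f a)),
        (forall a b, f a (x b) = if `[< a = b >] then 1 else 0) &
        linearly_dense (range x)].

(* |A| <= aleph_1, aleph_1 being the least uncountable cardinal:
   |A| is at most every uncountable cardinality. *)
Definition card_le_aleph1 (T : Type) (A : set T) : Prop :=
  forall (U : Type) (B : set U), ~ countable B -> A #<= B.

(* dens X >= omega_2, i.e. dens X > aleph_1: no dense subset has cardinality <= aleph_1. *)
Definition dens_ge_omega2 (T : topologicalType) : Prop :=
  forall D : set T, dense D -> ~ card_le_aleph1 D.

(* |S| = dens X, dens X being the least cardinality of a dense subset. *)
Definition card_eq_dens (T : topologicalType) (S : set T) : Prop :=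
  (exists D : set T, dense D /\ S #= D) /\
  (forall D : set T, dense D -> S #<= D).

Definition overcomplete (R : realType) (X : normedModType R) (S : set X) : Prop :=
  card_eq_dens S /\
  (forall L : set X, L `<=` S -> L #= S -> linearly_dense L).

(* Let {x_a; f_a} be the biorthogonal system and S a set with |S| = dens X > aleph_1.
   Every s has countable support {a | f_a s <> 0}, since s is a limit of finite
   combinations of the x_a; and there are more than aleph_1 indices, since otherwise
   the rational combinations of the x_a would form a dense set of size aleph_1.
   A counting argument then gives an index a such that ker f_a contains |S| points
   of S.  When cf |S| > aleph_1 this holds for all but countably many a: aleph_1
   indices whose kernels meet S in fewer than |S| points would cover S.  In general
   S is covered by aleph_1 pieces, each dominated by a subset of S of successor
   cardinality, taken as a minimal initial segment in a well-order of S.  These |S|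
   points of S lie in the proper closed subspace ker f_a, so S is not overcomplete.
   The cardinal arithmetic used (comparability, |A * A| = |A| for infinite A)
   comes from Zorn's lemma. *)

From mathcomp Require Import all_boot all_order all_algebra.
From mathcomp Require Import all_classical all_reals all_analysis.
From mathcomp Require Import wochoice.
Set Implicit Arguments. Unset Strict Implicit. Unset Printing Implicit Defensive.
Import Order.TTheory GRing.Theory Num.Theory.
Local Open Scope classical_set_scope.
Local Open Scope card_scope.
Section card_le_functions.
Variables (T U : Type) (A : set T) (B : set U).

Lemma card_le_fun (f : T -> U) : set_fun A B f -> set_inj A f -> A #<= B.
Proof.
move=> fAB fA; have [g] : $|{injfun A >-> B}| by apply/injfunPex; exists f.
exact: inj_card_le g.
Qed.

Lemma card_le_rel (G : T -> U -> Prop) :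
  (forall a, A a -> exists2 b, B b & G a b) ->
  (forall a a' b, A a -> A a' -> G a b -> G a' b -> a = a') -> A #<= B.
Proof.
move=> GAB Ginj; have [[a0 Aa0]|/nonemptyPn->] := pselect (A !=set0); last exact: card_ge0.
have [b0 _ _] := GAB a0 Aa0.
have [f Pf] : {f : T -> U & forall a, A a -> B (f a) /\ G a (f a)}.
  apply: (@choice _ _ (fun a b => A a -> B b /\ G a b)) => a.
  have [Aa|] := pselect (A a); last by exists b0.
  by have [b Bb Gab] := GAB a Aa; exists b.
apply: (card_le_fun (f := f)) => [a /Pf[]//|a a' /set_mem Aa /set_mem Aa' faa'].
by apply: (Ginj _ _ (f a) Aa Aa'); [case: (Pf a Aa)|rewrite faa'; case: (Pf a' Aa')].
Qed.

Lemma card_le_funP (b0 : U) : A #<= B -> exists2 f : T -> U, set_fun A B f & set_inj A f.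
Proof.
move=> /card_leP[g].
pose f x := if pselect (A x) is left Ax then val (g (SigSub (mem_set Ax))) else b0.
exists f => [x Ax|x y /set_mem Ax /set_mem Ay]; rewrite /f.
  by case: pselect => // Ax'; apply: set_valP.
case: pselect => // Ax'; case: pselect => // Ay' /val_inj/(@inj _ _ _ g).
by move=> /(_ (in_setT _) (in_setT _)) [].
Qed.

Lemma card_le_image_inj (f : T -> U) : set_inj A f -> A #<= f @` A.
Proof. by move/inj_card_eq; rewrite card_eq_le => /andP[]. Qed.

End card_le_functions.

Lemma bigcup_total_on2 T (F : set (set T)) x y : total_on F subset ->
  (\bigcup_(G in F) G) x -> (\bigcup_(G in F) G) y -> exists2 G, F G & G x /\ G y.
Proof.
move=> Ftot [G FG Gx] [G' FG' G'y].
have [GG'|G'G] := Ftot _ _ FG FG'; first by exists G' => //; split=> //; apply: GG'.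
by exists G => //; split=> //; apply: G'G.
Qed.

Definition inj_graph T U (G : set (T * U)) :=
  (forall x y y', G (x, y) -> G (x, y') -> y = y') /\
  (forall x x' y, G (x, y) -> G (x', y) -> x = x').

Lemma inj_graph_bigcup T U (F : set (set (T * U))) :
  F `<=` @inj_graph T U -> total_on F subset -> inj_graph (\bigcup_(G in F) G).
Proof.
move=> Finj Ftot; split=> [x y y'|x x' y] Gxy Gxy'.
  have [G /Finj[Gfun _] [Gx Gx']] := bigcup_total_on2 Ftot Gxy Gxy'.
  exact: Gfun Gx Gx'.
have [G /Finj[_ Ginj] [Gx Gx']] := bigcup_total_on2 Ftot Gxy Gxy'.
exact: Ginj Gx Gx'.
Qed.

Lemma card_le_total T U (A : set T) (B : set U) : A #<= B \/ B #<= A.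
Proof.
have [|M [[MAB [Mfun Minj]] Mmax]] :=
    @Zorn_bigcup _ [set G | G `<=` A `*` B /\ inj_graph G].
  move=> F FP Ftot /=; split; last by apply: inj_graph_bigcup Ftot => G /FP[].
  by move=> w [G /FP[GAB _] Gw]; apply: GAB.
have [domA|/existsNP[a /not_implyP[Aa aM]]] :=
    pselect (forall a, A a -> exists b, M (a, b)).
  left; apply: (card_le_rel (G := fun x y => M (x, y))) => [x /domA[y Mxy]|].
    by exists y => //; case: (MAB _ Mxy).
  by move=> x x' y _ _; apply: Minj.
have [domB|/existsNP[b /not_implyP[Bb bM]]] :=
    pselect (forall b, B b -> exists a, M (a, b)).
  right; apply: (card_le_rel (G := fun y x => M (x, y))) => [y /domB[x Mxy]|].
    by exists x => //; case: (MAB _ Mxy).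
  by move=> y y' x _ _; apply: Mfun.
exfalso; apply: (Mmax (M `|` [set (a, b)])).
  split=> [w|]; first by left.
  by move=> /(_ (a, b) (or_intror erefl)) Mab; apply: aM; exists b.
split; first by move=> w [/MAB//|->].
split=> [x y y'|x x' y] [Mxy|[-> ->]] [Mxy'|[]] //; try by move=> -> ->.
- exact: Mfun Mxy Mxy'.
- by move=> ex _; exfalso; apply: aM; exists y; rewrite -ex.
- by exfalso; apply: aM; exists y'.
- exact: Minj Mxy Mxy'.
- by move=> _ ey; exfalso; apply: bM; exists x; rewrite -ey.
- by exfalso; apply: bM; exists x'.
Qed.

Lemma card_le_nonempty T U (A : set T) (B : set U) : A #<= B -> A !=set0 -> B !=set0.
Proof.
move=> AB [a Aa]; apply/set0P/negP => /eqP B0; move: AB; rewrite B0.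
by move/card_le0P => A0; rewrite A0 in Aa.
Qed.

Lemma card_le_setX T T' U U' (A : set T) (A' : set T') (B : set U) (B' : set U') :
  A #<= A' -> B #<= B' -> A `*` B #<= A' `*` B'.
Proof.
move=> AA' BB'; have [[[a b] [Aa Bb]]|/nonemptyPn->] := pselect (A `*` B !=set0);
  last exact: card_ge0.
have [a' _] := card_le_nonempty AA' (ex_intro _ a Aa).
have [b' _] := card_le_nonempty BB' (ex_intro _ b Bb).
have [f fA finj] := card_le_funP a' AA'; have [g gB ginj] := card_le_funP b' BB'.
apply: (card_le_fun (f := fun p => (f p.1, g p.2))) => [[x y] [/fA ? /gB ?]//|].
move=> [x y] [x' y'] /set_mem[/= Ax By] /set_mem[/= Ax' By'] [].
by move=> /(finj _ _ (mem_set Ax) (mem_set Ax')) -> /(ginj _ _ (mem_set By) (mem_set By')) ->.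
Qed.

Lemma card_le_setU_sq T U (A : set T) (B C : set U) :
  [set: nat] #<= A -> A `*` A #<= A -> B #<= A -> C #<= A -> B `|` C #<= A.
Proof.
move=> natA AA BA CA; apply: card_le_trans AA.
have [a _] := infinite_setN0 ((infiniteP _).2 natA).
have [n nA ninj] := card_le_funP a natA.
have n01 : n 0%N <> n 1%N by move/(ninj _ _ (mem_set I) (mem_set I)).
have [f fB finj] := card_le_funP a BA; have [g gC ginj] := card_le_funP a CA.
pose k x := if pselect (B x) then (f x, n 0%N) else (g x, n 1%N).
apply: (card_le_fun (f := k)) => [x BCx|x y /set_mem BCx /set_mem BCy]; rewrite /k.
  case: pselect => [Bx|nBx]; first by split; [apply: fB|apply: nA].
  by split; [apply: gC; case: BCx|apply: nA].
case: pselect => Bx; case: pselect => By [] //.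
- by move/(finj _ _ (mem_set Bx) (mem_set By)).
- by move=> _ /esym/n01.
- move=> gxy; apply: (ginj _ _ _ _ gxy); apply: mem_set; [case: BCx|case: BCy] => //.
Qed.

Section square_injections.
Variable T : Type.
Implicit Types (A D : set T) (G : set ((T * T) * T)) (h : T * T -> T).

(* A relation [G] codes an injection [D * D -> D]; its domain [D] is read off the diagonal. *)
Definition sq_dom G : set T := [set x | exists z, G ((x, x), z)].

Definition sq_inj G := [/\ inj_graph G, G `<=` (sq_dom G `*` sq_dom G) `*` sq_dom G &
  forall x y, sq_dom G x -> sq_dom G y -> exists z, G ((x, y), z)].

Definition sq_graph D h : set ((T * T) * T) := [set w | (D `*` D) w.1 /\ w.2 = h w.1].

Lemma sq_dom_graph D h : sq_dom (sq_graph D h) = D.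
Proof. by apply/seteqP; split=> [x [z [[]]]|x Dx] //; exists (h (x, x)). Qed.

Lemma sq_inj_graph D h :
  set_fun (D `*` D) D h -> set_inj (D `*` D) h -> sq_inj (sq_graph D h).
Proof.
rewrite /sq_inj sq_dom_graph => hD hinj; split.
- split=> [p z z' [_ /= ->] [_ /= ->]|p p' z [Dp /= ->] [Dp' /= e]] //.
  by apply: hinj e; apply: mem_set.
- by move=> [p z] [Dp /= ->]; split=> //; apply: hD.
- by move=> x y Dx Dy; exists (h (x, y)).
Qed.

Lemma sq_injP G : sq_inj G -> exists h, [/\ G = sq_graph (sq_dom G) h,
  set_fun (sq_dom G `*` sq_dom G) (sq_dom G) h & set_inj (sq_dom G `*` sq_dom G) h].
Proof.
move=> [[Gfun Ginj] GD Gtot]; set D := sq_dom G in GD Gtot *.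
have [h Gh] : {h : T * T -> T & forall p, (D `*` D) p -> G (p, h p)}.
  apply: (@choice _ _ (fun p z => (D `*` D) p -> G (p, z))) => -[x y].
  have [[Dx Dy]|nD] := pselect ((D `*` D) (x, y)); last by exists x; move=> /nD.
  by have [z Gz] := Gtot x y Dx Dy; exists z.
exists h; split.
- apply/seteqP; split=> [[p z] Gpz|[p z] [Dp /= ->]]; last exact: Gh.
  by have [Dp _] := GD _ Gpz; split=> //; apply: Gfun Gpz (Gh p Dp).
- by move=> p Dp; have [_] := GD _ (Gh p Dp).
- move=> p q /set_mem Dp /set_mem Dq hpq.
  by apply: Ginj (Gh p Dp) _; rewrite hpq; apply: Gh.
Qed.

(* The alternative [G = set0] lets the union of the empty chain qualify. *)
Definition sq_inj_in A G :=
  [/\ sq_inj G, sq_dom G `<=` A & G = set0 \/ [set: nat] #<= sq_dom G].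

Lemma sq_dom_bigcup (F : set (set ((T * T) * T))) x :
  sq_dom (\bigcup_(G in F) G) x <-> exists2 G, F G & sq_dom G x.
Proof.
by split=> [[z [G FG Gz]]|[G FG [z Gz]]]; [exists G => //; exists z|exists z, G].
Qed.

Lemma sq_inj_in_bigcup A (F : set (set ((T * T) * T))) :
  F `<=` sq_inj_in A -> total_on F subset -> sq_inj_in A (\bigcup_(G in F) G).
Proof.
move=> FP Ftot; split; first split.
- by apply: inj_graph_bigcup Ftot => G /FP[[]].
- move=> w [G FG Gw]; have [[_ GD _] _ _] := FP _ FG.
  have [[Dx Dy] Dz] := GD _ Gw.
  by split; first split; apply/sq_dom_bigcup; exists G.
- move=> x y /sq_dom_bigcup[G1 FG1 [z1 G1x]] /sq_dom_bigcup[G2 FG2 [z2 G2y]].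
  have [G FG [Gx Gy]] := bigcup_total_on2 Ftot (ex_intro2 _ _ G1 FG1 G1x)
    (ex_intro2 _ _ G2 FG2 G2y).
  have [[_ _ Gtot] _ _] := FP _ FG.
  have [z Gz] := Gtot x y (ex_intro _ _ Gx) (ex_intro _ _ Gy).
  by exists z, G.
- by move=> x /sq_dom_bigcup[G FG Gx]; have [_ GA _] := FP _ FG; apply: GA.
- have [[G FG [w Gw]]|noG] := pselect (exists2 G, F G & G !=set0).
    right; have [_ _ [G0|natG]] := FP _ FG; first by rewrite G0 in Gw.
    apply: card_le_trans natG (subset_card_le _) => x Gx.
    by apply/sq_dom_bigcup; exists G.
  left; apply/seteqP; split=> // w [G FG Gw].
  by apply: noG; exists G => //; exists w.
Qed.

End square_injections.

Section square_extension.
Variables (T : Type) (D C : set T) (h : T * T -> T) (e v : T -> T).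
Hypotheses (hD : set_fun (D `*` D) D h) (hinj : set_inj (D `*` D) h).
Hypotheses (eC : set_fun D C e) (einj : set_inj D e) (CD : forall x, C x -> ~ D x).
Hypotheses (vD : set_fun (D `|` C) D v) (vinj : set_inj (D `|` C) v).

Definition sq_ext p := if pselect ((D `*` D) p) then h p else e (h (v p.1, v p.2)).

Let vD2 p : ((D `|` C) `*` (D `|` C)) p -> (D `*` D) (v p.1, v p.2).
Proof. by case=> /vD ? /vD ?. Qed.

Lemma sq_ext_fun : set_fun ((D `|` C) `*` (D `|` C)) (D `|` C) sq_ext.
Proof.
move=> p DCp; rewrite /sq_ext; case: pselect => [Dp|nDp]; first by left; apply: hD.
by right; apply/eC/hD/vD2.
Qed.

Lemma sq_ext_inj : set_inj ((D `|` C) `*` (D `|` C)) sq_ext.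
Proof.
move=> p q /set_mem DCp /set_mem DCq; rewrite /sq_ext.
case: pselect => Dp; case: pselect => Dq /=.
- by apply: hinj; apply: mem_set.
- move=> hpq; have /CD : C (h p) by rewrite hpq; apply/eC/hD/vD2.
  by move/(_ (hD Dp)).
- move=> hpq; have /CD : C (h q) by rewrite -hpq; apply/eC/hD/vD2.
  by move/(_ (hD Dq)).
- move/einj => /(_ (mem_set (hD (vD2 DCp))) (mem_set (hD (vD2 DCq)))).
  move/hinj => /(_ (mem_set (vD2 DCp)) (mem_set (vD2 DCq))) [].
  case: p q DCp DCq {Dp Dq} => [x y] [x' y'] [DCx DCy] [DCx' DCy'] /=.
  move/vinj => /(_ (mem_set DCx) (mem_set DCx')) ->.
  by move/vinj => /(_ (mem_set DCy) (mem_set DCy')) ->.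
Qed.

Lemma sq_graph_ext : sq_graph D h `<=` sq_graph (D `|` C) sq_ext.
Proof.
move=> [p z] [Dp /= ->]; split; first by case: Dp; split; left.
by rewrite /sq_ext; case: pselect.
Qed.

End square_extension.

Section hessenberg.
Variable T : Type.
Implicit Types (A D : set T) (h : T * T -> T).

Lemma sq_inj_in_nat A : [set: nat] #<= A -> exists2 G, sq_inj_in A G & G !=set0.
Proof.
move=> natA; have [a _] := infinite_setN0 ((infiniteP _).2 natA).
have [n nA ninj] := card_le_funP a natA.
set D := n @` setT.
have [Dnat natD] : D #<= [set: nat] /\ [set: nat] #<= D.
  by apply/andP; rewrite -card_eq_le; apply: inj_card_eq.
have DD : D `*` D #<= D.
  apply: card_le_trans (card_le_setX Dnat Dnat) _; rewrite setXTT.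
  by apply: card_le_trans natD; move: card_nat2; rewrite card_eq_le => /andP[].
have [h hD hinj] := card_le_funP a DD.
exists (sq_graph D h).
  rewrite /sq_inj_in sq_dom_graph; split; [exact: sq_inj_graph| |by right].
  by move=> _ [i _ <-]; apply: nA.
by exists ((n 0%N, n 0%N), h (n 0%N, n 0%N)); do 2 split=> //; exists 0%N.
Qed.

Lemma sq_inj_in_extend A D h : [set: nat] #<= D -> D `<=` A ->
    set_fun (D `*` D) D h -> set_inj (D `*` D) h -> D #<= A `\` D ->
  exists2 G, sq_inj_in A G & sq_graph D h `<` G.
Proof.
move=> natD DA hD hinj DAD.
have [d0 Dd0] := infinite_setN0 ((infiniteP _).2 natD).
have [e eD einj] := card_le_funP d0 DAD.
have [v vD vinj] := card_le_funP d0
  (card_le_setU_sq natD (card_le_fun hD hinj) (card_lexx D) (card_image_le e D)).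
have eC : set_fun D (e @` D) e by move=> d Dd; exists d.
have CD x : (e @` D) x -> ~ D x by move=> [d Dd <-]; have [] := eD d Dd.
exists (sq_graph (D `|` e @` D) (sq_ext D h e v)).
  rewrite /sq_inj_in sq_dom_graph; split.
  - exact: sq_inj_graph (sq_ext_fun hD eC vD) (sq_ext_inj hD hinj eC einj CD vD vinj).
  - by move=> x [/DA//|[d Dd <-]]; have [] := eD d Dd.
  - by right; apply: card_le_trans natD (subset_card_le (@subsetUl _ _ _)).
split; first exact: sq_graph_ext.
move=> /(_ ((e d0, e d0), sq_ext D h e v (e d0, e d0))) [].
  by split=> //; split; right; exists d0.
by move=> [Dc _] _; apply: (CD _ _ Dc); exists d0.
Qed.

Theorem card_setXX_le A : [set: nat] #<= A -> A `*` A #<= A.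
Proof.
move=> natA.
have [|M [[Msq MA Minf] Mmax]] := @Zorn_bigcup _ (sq_inj_in A).
  exact: sq_inj_in_bigcup.
set D := sq_dom M in MA Minf.
have natD : [set: nat] #<= D.
  case: Minf => // M0; exfalso.
  have [G PG [w Gw]] := sq_inj_in_nat natA.
  by apply: (Mmax G) => //; rewrite M0; split=> // /(_ w Gw).
have [h [MG hD hinj]] := sq_injP Msq.
have DD : D `*` D #<= D := card_le_fun hD hinj.
suff AD : A #<= D.
  by apply: card_le_trans (card_le_setX AD AD) (card_le_trans DD (subset_card_le MA)).
have [ADD|DAD] := card_le_total (A `\` D) D.
  apply: card_le_trans (card_le_setU_sq natD DD (card_lexx D) ADD).
  by apply: subset_card_le => x Ax; have [Dx|nDx] := pselect (D x); [left|right].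
have [G PG MG'] := sq_inj_in_extend natD MA hD hinj DAD.
by exfalso; apply: (Mmax G) PG; rewrite MG.
Qed.

End hessenberg.

Section infinite_cardinal_arithmetic.
Variables (U : Type) (A : set U).
Hypothesis natA : [set: nat] #<= A.

Lemma card_le_setX_inf T T' (B : set T) (C : set T') : B #<= A -> C #<= A -> B `*` C #<= A.
Proof. by move=> BA CA; apply: card_le_trans (card_le_setX BA CA) (card_setXX_le natA). Qed.

Lemma card_le_setU_inf T (B C : set T) : B #<= A -> C #<= A -> B `|` C #<= A.
Proof. exact: card_le_setU_sq natA (card_setXX_le natA). Qed.

Lemma card_le_bigcup_inf I T (D : set I) (F : I -> set T) :
  D #<= A -> (forall i, D i -> F i #<= A) -> \bigcup_(i in D) F i #<= A.
Proof.
move=> DA FA; have [a _] := infinite_setN0 ((infiniteP _).2 natA).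
have [d dA dinj] := card_le_funP a DA.
have [phi phiA] : {phi : I -> T -> U &
    forall i, D i -> set_fun (F i) A (phi i) /\ set_inj (F i) (phi i)}.
  apply: (@choice _ _ (fun i f => D i -> set_fun (F i) A f /\ set_inj (F i) f)) => i.
  have [Di|nDi] := pselect (D i); last by exists (fun=> a).
  by have [f ? ?] := card_le_funP a (FA i Di); exists f.
apply: (@card_le_trans _ _ _ (D `*`` F)).
  apply: card_le_trans (card_image_le snd _).
  by apply: subset_card_le => x [i Di Fix]; exists (i, x).
apply: card_le_trans (card_setXX_le natA).
apply: (card_le_fun (f := fun p => (d p.1, phi p.1 p.2))).
  by move=> [i x] [/= Di Fix]; split; [apply: dA|have [+ _] := phiA i Di; apply].
move=> [i x] [j y] /set_mem[/= Di Fix] /set_mem[/= Dj Fjy] [].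
move/(dinj _ _ (mem_set Di) (mem_set Dj)) => eij; rewrite -{j}eij in Dj Fjy *.
by have [_ phiinj] := phiA i Di; move/(phiinj _ _ (mem_set Fix) (mem_set Fjy)) ->.
Qed.

End infinite_cardinal_arithmetic.

Section well_order_segments.
Variables (V : eqType) (R : rel V).
Hypothesis woR : well_order R.

Let woC : wo_chain R predT.
Proof. by move=> A _; apply: woR. Qed.

Lemma wo_total x y : R x y \/ R y x.
Proof. by have /orP[] := wo_chainW woC (x := x) (y := y) isT isT; [left|right]. Qed.

Lemma wo_antisym x y : R x y -> R y x -> x = y.
Proof. by move=> Rxy Ryx; apply: (wo_chain_antisymmetric woC) => //; rewrite Rxy Ryx. Qed.

Lemma wo_min (Q : set V) : Q !=set0 -> exists2 m, Q m & forall y, Q y -> R m y.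
Proof.
move=> [x Qx]; have [|m [[/asboolP Qm mlb] _]] := @woR [pred z | `[< Q z >]].
  by exists x; apply/asboolP.
by exists m => // y Qy; apply: mlb; apply/asboolP.
Qed.

(* All initial segments of [P] are at most [|T|], i.e. [P] has order type at most [|T|^+]. *)
Definition segments_le W (P : set V) (T : set W) :=
  forall y, P y -> [set z | P z /\ R z y] #<= T.

Lemma exists_segments_le W (T : set W) (Y : set V) : [set: nat] #<= T -> ~ (Y #<= T) ->
  exists P, [/\ P `<=` Y, ~ (P #<= T) & segments_le P T].
Proof.
move=> natT YT.
have [[m [Ym mT] mmin]|] :=
  pselect (exists2 m, Y m /\ ~ ([set z | Y z /\ R z m] #<= T) &
    forall y, Y y /\ ~ ([set z | Y z /\ R z y] #<= T) -> R m y).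
- exists [set z | Y z /\ R z m /\ z <> m]; split=> [z []//|PT|y [Yy [Rym ym]] ].
    apply: mT; apply: card_le_trans
      (card_le_setU_inf natT PT (card_le_trans (countable1 m) natT)).
    by apply: subset_card_le => z [Yz Rzm]; have [->|] := pselect (z = m); [right|left].
  apply: card_le_trans (subset_card_le _) (_ : [set z | Y z /\ R z y] #<= T).
    by move=> z [[Yz _] Rzy].
  apply: contra_notP ym => yT.
  exact: wo_antisym Rym (mmin y (conj Yy yT)).
- move=> nomin; exists Y; split=> // y Yy.
  apply: contra_notP nomin => yT.
  have [|m [Ym mT] mmin] := wo_min (Q := [set y | Y y /\ ~ ([set z | Y z /\ R z y] #<= T)]).
    by exists y.
  by exists m.
Qed.

Lemma segments_le_cofinal W (T : set W) (P Q : set V) : [set: nat] #<= T ->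
  segments_le P T -> Q `<=` P -> ~ (Q #<= T) -> P #<= Q.
Proof.
move=> natT PT QP QT.
have TQ : T #<= Q by case: (card_le_total Q T).
have natQ := card_le_trans natT TQ.
apply: card_le_trans (card_le_bigcup_inf natQ (card_lexx Q)
  (fun q Qq => card_le_trans (PT q (QP q Qq)) TQ)).
apply: subset_card_le => p Pp.
have [[q Qq Rpq]|noq] := pselect (exists2 q, Q q & R p q); first by exists q.
exfalso; apply: QT; apply: card_le_trans (PT p Pp).
apply: subset_card_le => q Qq; split; first exact: QP.
by case: (wo_total q p) => // Rpq; exfalso; apply: noq; exists q.
Qed.

End well_order_segments.

Lemma uncountable_card_nat_le T (A : set T) : ~ countable A -> [set: nat] #<= A.
Proof. by case: (card_le_total A [set: nat]). Qed.

Lemma exists_aleph1 (V : eqType) (S : set V) : ~ countable S ->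
  exists2 W, W `<=` S & ~ countable W /\ card_le_aleph1 W.
Proof.
move=> Snc; have [R woR] := well_ordering_principle V.
have [P [PS Pnc Pseg]] := exists_segments_le woR (card_lexx [set: nat]) Snc.
exists P => //; split=> // U B Bnc.
have [//|BP] := card_le_total P B.
have [p0 _] := infinite_setN0 ((infiniteP _).2 (uncountable_card_nat_le Pnc)).
have [phi phiP phiinj] := card_le_funP p0 BP.
apply: card_le_trans (card_image_le phi B).
apply: (segments_le_cofinal woR (card_lexx _) Pseg) => [_ [b Bb <-]|]; first exact: phiP.
by move=> phiBcnt; apply/Bnc/(card_le_trans _ phiBcnt)/card_le_image_inj.
Qed.

(* [|W| < cf |P|], phrased without cardinals: [P] is not covered by [|W|] sets
   each smaller than [P]. *)
Definition cof_gt U V (W : set U) (P : set V) :=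
  forall (I : Type) (B : set I) (F : I -> set V),
    B #<= W -> P `<=` \bigcup_(i in B) F i -> exists2 i, B i & P #<= F i.

Lemma segments_le_cof_gt (V : eqType) (R : rel V) U W (T : set W) (S : set U) (P : set V) :
  well_order R -> [set: nat] #<= T -> S #<= T -> ~ (P #<= T) -> segments_le R P T ->
  cof_gt S P.
Proof.
move=> woR natT ST PT Pseg I B F BS PF.
have [[i Bi iT]|allT] := pselect (exists2 i, B i & ~ (P `&` F i #<= T)).
  exists i => //.
  have := segments_le_cofinal woR natT Pseg (@subIsetl _ P (F i)) iT.
  by move/card_le_trans; apply; apply: subset_card_le; apply: subIsetr.
exfalso; apply: PT.
have BT : B #<= T := card_le_trans BS ST.
have PFT i : B i -> P `&` F i #<= T.
  by move=> Bi; apply: contra_notP allT => iT; exists i.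
apply: card_le_trans (card_le_bigcup_inf natT BT PFT).
by apply: subset_card_le => p Pp; have [i Bi Fip] := PF p Pp; exists i.
Qed.

Lemma cof_gt_small_zero_sets_countable (V G : Type) (W P : set V) (Z : G -> set V) :
  ~ countable W -> card_le_aleph1 W -> cof_gt W P ->
  (forall p, P p -> countable [set a | ~ Z a p]) ->
  countable [set a | ~ (P #<= P `&` Z a)].
Proof.
move=> Wnc W1 Pcof Pcnt; apply: contrapT => badnc.
have [a0 _] := infinite_setN0 ((infiniteP _).2 (uncountable_card_nat_le badnc)).
have [phi phibad phiinj] := card_le_funP a0 (W1 _ _ badnc).
have Bnc : ~ countable (phi @` W).
  by move=> Bcnt; apply/Wnc/(card_le_trans _ Bcnt)/card_le_image_inj.
have [|_ [w Ww <-] PZ] := Pcof _ (phi @` W) (fun a => P `&` Z a) (card_image_le phi W).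
  move=> p Pp; apply: contrapT => nop; apply/Bnc/(card_le_trans _ (Pcnt p Pp)).
  by apply: subset_card_le => a Ba Zap; apply: nop; exists a.
exact: phibad Ww PZ.
Qed.

Lemma cof_gt_cover (V : eqType) (S W : set V) : ~ countable W -> ~ (S #<= W) ->
  exists (I : Type) (B : set I) (T P : I -> set V), [/\ B #<= W,
    S `<=` \bigcup_(i in B) T i &
    forall i, B i -> [/\ P i `<=` S, cof_gt W (P i), W #<= T i & T i #<= P i]].
Proof.
move=> Wnc SW; have natW := uncountable_card_nat_le Wnc.
have [Scof|] := pselect (cof_gt W S).
  exists unit, setT, (fun=> S), (fun=> S); split=> [|s Ss|_ _]; last split=> //.
  - exact: card_le_trans (countableP _) natW.
  - by exists tt.
  - by case: (card_le_total S W).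
move=> /existsNP[I /existsNP[B /existsNP[F /not_implyP[BW /not_implyP[SF noF]]]]].
have [R woR] := well_ordering_principle V.
pose T i := (S `&` F i) `|` W. (* padded by [W] to be uncountable *)
have WT i : W #<= T i by apply: subset_card_le; apply: subsetUr.
have natT i : [set: nat] #<= T i := card_le_trans natW (WT i).
have ST i : B i -> ~ (S #<= T i).
  move=> Bi STi; have [SFW|WSF] := card_le_total (S `&` F i) W.
    exact/SW/(card_le_trans STi)/(card_le_setU_inf natW SFW (card_lexx W)).
  apply: noF; exists i => //; apply: card_le_trans STi _.
  apply: card_le_trans (card_le_setU_inf (card_le_trans natW WSF) (card_lexx _) WSF) _.
  by apply: subset_card_le; apply: subIsetr.
have [P PT] : {P : I -> set V & forall i, B i ->
    [/\ P i `<=` S, ~ (P i #<= T i) & segments_le R (P i) (T i)]}.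
  apply: (@choice _ _ (fun i P => B i ->
    [/\ P `<=` S, ~ (P #<= T i) & segments_le R P (T i)])) => i.
  have [Bi|nBi] := pselect (B i); last by exists set0.
  by have [P ?] := exists_segments_le woR (natT i) (ST i Bi); exists P.
exists I, B, T, P; split=> // [s Ss|i Bi].
  by have [i Bi Fis] := SF s Ss; exists i => //; left.
have [PS PiT Pseg] := PT i Bi; split=> //.
  exact: segments_le_cof_gt woR (natT i) (WT i) PiT Pseg.
by case: (card_le_total (T i) (P i)).
Qed.

Lemma exists_large_zero_set (V : eqType) G (S W : set V) (Z : G -> set V) :
  ~ countable W -> card_le_aleph1 W -> (forall s, S s -> countable [set a | ~ Z a s]) ->
  ~ (S #<= W) -> ~ ([set: G] #<= W) -> exists a, S #<= S `&` Z a.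
Proof.
move=> Wnc W1 Scnt SW GW; have natW := uncountable_card_nat_le Wnc.
have [I [B [T [P [BW ST HP]]]]] := cof_gt_cover Wnc SW.
pose small i := [set a | ~ (P i #<= P i `&` Z a)].
have smallW : \bigcup_(i in B) small i #<= W.
  apply: (card_le_bigcup_inf natW BW) => i Bi; apply: card_le_trans natW.
  have [PS Pcof _ _] := HP i Bi.
  by apply: cof_gt_small_zero_sets_countable Wnc W1 Pcof _ => p /PS; apply: Scnt.
have [a abig] : exists a, ~ (\bigcup_(i in B) small i) a.
  apply: contrapT => /forallNP allsmall; apply/GW/(card_le_trans _ smallW).
  by apply: subset_card_le => a _; apply: contrapT; apply: allsmall.
exists a.
have TZ i : B i -> T i #<= S `&` Z a.
  move=> Bi; have [PS _ _ TP] := HP i Bi; apply: card_le_trans TP _.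
  have PZ : P i #<= P i `&` Z a by apply: contrapT => Psmall; apply: abig; exists i.
  by apply: card_le_trans PZ _; apply: subset_card_le => s [/PS].
have [i Bi] : B !=set0.
  have [s Ss] : S !=set0 by apply/set0P/negP => /eqP S0; apply: SW; rewrite S0 card_ge0.
  by have [i Bi _] := ST s Ss; exists i.
have [_ _ WT _] := HP i Bi; have WZ := card_le_trans WT (TZ i Bi).
apply: card_le_trans (subset_card_le ST) _.
exact: (card_le_bigcup_inf (card_le_trans natW WZ) (card_le_trans BW WZ) TZ).
Qed.

Local Open Scope ring_scope.

Section dual_elements.
Variables (R : realType) (X : normedModType R) (g : X -> R).
Hypothesis gdual : is_dual_elt g.

Lemma dual_elt0 : g 0 = 0.
Proof. by case: gdual => _ gZ _; rewrite -(scale0r (0 : X)) gZ mul0r. Qed.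

Lemma dual_elt_sum n (c : 'I_n -> R) (v : 'I_n -> X) :
  g (\sum_(i < n) c i *: v i) = \sum_(i < n) c i * g (v i).
Proof.
have [gD gZ _] := gdual; elim: n c v => [|n IHn] c v; first by rewrite !big_ord0 dual_elt0.
by rewrite !big_ord_recr /= gD gZ IHn.
Qed.

Lemma dual_elt_near_neq0 p : g p != 0 -> \forall y \near p, g y != 0.
Proof.
have [_ _ gcont] := gdual; rewrite -normr_gt0 => gp.
move: (gcont p) => /cvgr_dist_lt /(_ _ gp); apply: filterS => y /=.
by apply: contraTneq => ->; rewrite subr0 ltxx.
Qed.

Lemma dual_elt_not_linearly_dense p (L : set X) :
  g p != 0 -> (forall l, L l -> g l = 0) -> ~ linearly_dense L.
Proof.
move=> gp gL Ldense.
have : closure (lspan L) p by rewrite Ldense.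
move=> /(_ _ (dual_elt_near_neq0 gp)) [_ [[n [c [v [vL ->]]]] /=]].
by rewrite dual_elt_sum big1 ?eqxx // => i _; rewrite gL ?mulr0.
Qed.

End dual_elements.

Section range_combinations.
Variables (R : realType) (X : normedModType R) (G : Type) (x : G -> X).

Lemma lspan_rangeP y : lspan (range x) y ->
  exists n (c : 'I_n -> R) (w : 'I_n -> G), y = \sum_(i < n) c i *: x (w i).
Proof.
move=> [n [c [v [vx ->]]]].
have [w wv] : {w : 'I_n -> G & forall i, x (w i) = v i}.
  by apply: (@choice _ _ (fun i a => x a = v i)) => i; have [a _ <-] := vx i; exists a.
by exists n, c, w; apply: eq_bigr => i _; rewrite wv.
Qed.

Fixpoint rat_comb n : set X :=
  if n is n'.+1 then [set y | exists d a (q : rat), rat_comb n' d /\ y = d + ratr q *: x a]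
  else [set 0].

Lemma rat_comb_card_le U (W : set U) n :
  [set: nat] #<= W -> [set: G] #<= W -> rat_comb n #<= W.
Proof.
move=> natW GW; elim: n => [|n IHn] /=; first exact: card_le_trans (countable1 0) natW.
have ratW : [set: rat] #<= W.
  by apply: card_le_trans natW; move: card_rat; rewrite card_eq_le => /andP[].
pose comb (p : X * (G * rat)) := p.1 + ratr p.2.2 *: x p.2.1.
apply: (@card_le_trans _ _ _ (comb @` (rat_comb n `*` ([set: G] `*` [set: rat])))).
  by apply: subset_card_le => _ [d [a [q [dn ->]]]]; exists (d, (a, q)).
apply: card_le_trans (card_image_le _ _) _.
exact: (card_le_setX_inf natW IHn (card_le_setX_inf natW GW ratW)).
Qed.

Lemma rat_comb_approx k (c : 'I_k -> R) (w : 'I_k -> G) e : 0 < e ->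
  exists2 d, rat_comb k d & `|\sum_(i < k) c i *: x (w i) - d| < e.
Proof.
elim: k c w e => [|k IHk] c w e e0; first by exists 0; rewrite //= big_ord0 subr0 normr0.
have e2 : 0 < e / 2 by rewrite divr_gt0.
have [d dk de] := IHk (fun i => c (widen_ord (leqnSn k) i))
  (fun i => w (widen_ord (leqnSn k) i)) _ e2.
set xk := x (w ord_max); have xk1 : 0 < `|xk| + 1 by rewrite ltr_wpDl.
have [q cq] : exists q : rat, `|c ord_max - ratr q| < e / 2 / (`|xk| + 1).
  have := @rat_in_itvoo R (c ord_max) (c ord_max + e / 2 / (`|xk| + 1)).
  rewrite ltrDl divr_gt0 // => /(_ isT)[q]; rewrite in_itv /= => /andP[cq qc].
  by exists q; rewrite ltr_distl ltrBlDr qc (lt_trans cq) // ltrDl divr_gt0.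
exists (d + ratr q *: xk); first by exists d, (w ord_max), q.
set s := \sum_(i < k) _ in de.
have -> : \sum_(i < k.+1) c i *: x (w i) - (d + ratr q *: xk) =
    (s - d) + (c ord_max - ratr q) *: xk.
  by rewrite big_ord_recr /= opprD addrACA scalerBl.
have qxk : `|(c ord_max - ratr q) *: xk| < e / 2.
  rewrite ltr_pdivlMr // in cq; rewrite normrZ; apply: le_lt_trans cq.
  by rewrite ler_wpM2l // lerDl.
by apply: le_lt_trans (ler_normD _ _) _; rewrite (splitr e) ltrD.
Qed.

Lemma rat_comb_dense : linearly_dense (range x) -> dense (\bigcup_(n in [set: nat]) rat_comb n).
Proof.
move=> xdense O [p Op] Oopen.
have /nbhs_ballP[e e0 eO] : nbhs p O by move: Oopen; rewrite openE => /(_ _ Op).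
have e2 : 0 < e / 2 by rewrite divr_gt0.
have : closure (lspan (range x)) p by rewrite xdense.
move=> /(_ _ (nbhsx_ballx p _ e2)) [_ [/lspan_rangeP[k [c [w ->]]] pv]].
have [d dk vd] := rat_comb_approx c w e2.
exists d; split; last by exists k.
apply: eO; rewrite -ball_normE /= (splitr e) -(subrK (\sum_(i < k) c i *: x (w i)) p).
rewrite -addrA; apply: le_lt_trans (ler_normD _ _) _; apply: ltrD => //.
by move: pv; rewrite -ball_normE.
Qed.

End range_combinations.

Section biorthogonal_supports.
Variables (R : realType) (X : normedModType R) (G : Type) (x : G -> X) (f : G -> X -> R).
Hypotheses (fdual : forall a, is_dual_elt (f a))
  (fx : forall a b, f a (x b) = if `[< a = b >] then 1 else 0).

Lemma lspan_support_finite y : lspan (range x) y -> finite_set [set a | f a y != 0].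
Proof.
move=> /lspan_rangeP[n [c [w ->]]].
apply: (@sub_finite_set _ _ (w @` setT)); last exact: finite_image finite_finset.
move=> a; rewrite /= dual_elt_sum //; apply: contraNP => nwa; apply/eqP.
apply: big1 => i _; rewrite fx; case: asboolP => [ai|_]; last by rewrite mulr0.
by exfalso; apply: nwa; exists i.
Qed.

Lemma support_countable s : linearly_dense (range x) -> countable [set a | f a s != 0].
Proof.
move=> xdense.
have [y yP] : {y : nat -> X & forall n, lspan (range x) (y n) /\ ball s n.+1%:R^-1 (y n)}.
  apply: (@choice _ _ (fun n y => lspan (range x) y /\ ball s n.+1%:R^-1 y)) => n.
  have : closure (lspan (range x)) s by rewrite xdense.
  have n1 : 0 < n.+1%:R^-1 :> R by [].
  by move=> /(_ _ (nbhsx_ballx s _ n1)) [z ?]; exists z.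
apply: (@sub_countable _ _ _ (\bigcup_(n in [set: nat]) [set a | f a (y n) != 0])).
  apply: subset_card_le => a fas.
  have /nbhs_ballP[e e0 eball] := dual_elt_near_neq0 (fdual a) fas.
  have [n ne] : exists n, n.+1%:R^-1 < e.
    by exists (Num.truncn e^-1); rewrite invf_plt ?posrE // truncnS_gt.
  by exists n => //; apply: eball; apply: (le_ball (ltW ne)); case: (yP n).
apply: bigcup_countable => [|n _]; first exact: countableP.
by apply/finite_set_countable/lspan_support_finite; case: (yP n).
Qed.

End biorthogonal_supports.

Theorem theorem3p6 (R : realType) (X : completeNormedModType R) :
  dens_ge_omega2 X ->
  has_fundamental_biorthogonal_system X ->
  forall S : set X, ~ overcomplete S.
Proof.
move=> dens [G [x [f [fdual fx xdense]]]] S [[[D [Ddense SD]] _] Sdense].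
have dense_gt (W D' : set X) : dense D' -> card_le_aleph1 W -> ~ (D' #<= W).
  by move=> D'dense W1 D'W; apply: (dens D' D'dense) => U B /W1 /(card_le_trans D'W).
have DS : D #<= S by move: SD; rewrite card_eq_le => /andP[].
have Snc : ~ countable S.
  move=> Scnt; apply: (dens D Ddense) => U B /uncountable_card_nat_le natB.
  exact: card_le_trans DS (card_le_trans Scnt natB).
have [W _ [Wnc W1]] := exists_aleph1 Snc.
have natW := uncountable_card_nat_le Wnc.
have [a SZ] : exists a, S #<= S `&` [set s | f a s = 0].
  apply: (exists_large_zero_set Wnc W1) => [s _||GW].
  - apply: sub_countable (support_countable fdual fx s xdense).
    by apply: subset_card_le => a /eqP.
  - by move=> SW; apply: (dense_gt W D Ddense W1 (card_le_trans DS SW)).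
  - apply: (dense_gt W _ (rat_comb_dense xdense) W1).
    by apply: (card_le_bigcup_inf natW natW) => n _; apply: rat_comb_card_le.
have fxa : f a (x a) != 0 by rewrite fx asboolT // oner_neq0.
have SZS : S `&` [set s | f a s = 0] #= S.
  by apply: Cantor_Bernstein => //; apply: subset_card_le; apply: subIsetl.
have SZdense := Sdense _ (@subIsetl _ S _) SZS.
by apply: (dual_elt_not_linearly_dense (fdual a) fxa _ SZdense) => s [].
Qed.
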